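(* Let $2\le n<m$, $Q=\sum_{i\in[m]}q_i\mathrm B(\sigma_i)\in\mathbb B_m^*$ with all $q_i>0$ and $0\le\sigma_1<\cdots<\sigma_m\le1/2$, and let $W=D_Q(i_2,\dots,i_n;s_2,\dots,s_n)=\sum_{j\in[n]}p_j\mathrm B(\varepsilon_j)$ and $W'=D_Q(i'_2,\dots,i'_n;s'_2,\dots,s'_n)=\sum_{j\in[n]}p'_j\mathrm B(\varepsilon'_j)$ be $2n$-P$^*$-degradations of $Q$ (with $p_j,\varepsilon_j$ and $p'_j,\varepsilon'_j$ as in the construction of $D_Q$). Suppose $(i_k,s_k)=(i'_j,s'_j)$ for some $k,j\in\{2,\dots,n\}$. Then $p_k\ge p'_j$ if $\varepsilon_k\ge\varepsilon'_j$, and $p_{k-1}\ge p'_{j-1}$ if $\varepsilon_{k-1}\le\varepsilon'_{j-1}$.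
   Context: A BIDMC $W$ has input uniform on $\{0,1\}$, discrete output alphabet $\mathcal Y$ and transition probabilities $\Pr(y\mid x)$; its LR-profile is $P_W(\varepsilon)=\Pr\big(\mathcal L_W(y)=\varepsilon/(1-\varepsilon)\big)$ with $\mathcal L_W(\hat y)=\Pr(y=\hat y\mid x=0)/\Pr(y=\hat y\mid x=1)$, and $W\cong W'$ if LR-profiles coincide; channel identities are up to $\cong$. $W'\preccurlyeq W$ if there is a channel $T$ from the output alphabet of $W$ to that of $W'$ with $\Pr(y'\mid x'=a)=\sum_{y}\Pr(y\mid x=a)T(y'\mid y)$. $\mathrm B(\varepsilon)$ is the BSC with crossover probability $\varepsilon$; $\sum_iq_iW_i$ denotes the random switching channel (use $W_i$ with probability $q_i$ independently of the input and output the index $i$ along with the output). $\mathbb B_n$ is the set of BIDMCs equivalent to $\sum_{i\in[n]}p_i\mathrm B(\varepsilon_i)$ for a probability vector $(p_i)$ and $\varepsilon_i\in[0,1]$; $\mathbb B_n^*=\mathbb B_n\setminus\mathbb B_{n-1}$. $P_\epsilon(W)=\frac12\sum_{y}\min\{\Pr(y\mid x=0),\Pr(y\mid x=1)\}$. For a symmetric BIDMC $Q$ and $n\ge1$, $W$ is a $2n$-P-degradation of $Q$ if $W\in\mathbb B_n$, $W\preccurlyeq Q$ and $P_\epsilon(W)=\min\{P_\epsilon(W'):W'\in\mathbb B_n,\ W'\preccurlyeq Q\}$. Construction of $D_Q$: for $Q$ as in the claim, put $q_0=q_{m+1}=0$. Given integers $1\le i_2<\cdots<i_n\le m$ and reals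 $s_j\in[0,q_{i_j}]$, set $i_1=0$, $s_1=0$, $i_{n+1}=m+1$, $s_{n+1}=0$, and for $j\in[n]$ $$p_j=s_j+(q_{i_{j+1}}-s_{j+1})+\sum_{i_j<i<i_{j+1}}q_i,\qquad p_j\varepsilon_j=s_j\sigma_{i_j}+(q_{i_{j+1}}-s_{j+1})\sigma_{i_{j+1}}+\sum_{i_j<i<i_{j+1}}q_i\sigma_i$$ (terms with weight $0$ contribute $0$). Then $D_Q(i_2,\dots,i_n;s_2,\dots,s_n)=\sum_{j\in[n]:p_j>0}p_j\mathrm B(\varepsilon_j)$; the pairs $(i_j,s_j)$ are its splitting patterns. Such a channel is a $2n$-P$^*$-degradation of $Q$ if (i) all $p_j>0$ and $0\le\varepsilon_1<\cdots<\varepsilon_n\le1/2$; (ii) it is a $2n$-P-degradation of $Q$; (iii) for every $j\in[n]$ with $i_{j+1}=i_j+1$: if $s_j=0$ then $s_{j+1}=0$, and if $s_{j+1}=q_{i_{j+1}}$ then $s_j=q_{i_j}$. *)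

From HB Require Import structures.
From mathcomp Require Import all_boot all_order all_algebra.
From mathcomp Require Import reals.
Set Implicit Arguments. Unset Strict Implicit. Unset Printing Implicit Defensive.
Import Order.TTheory GRing.Theory Num.Theory.
Local Open Scope ring_scope.

Section Channels.
Variable R : realType.

(* A (raw) binary-input channel: input 0 is [false], input 1 is [true]. *)
Record chan := Chan { out : finType; tr : bool -> out -> R }.
Arguments tr : clear implicits.

Definition valid (W : chan) : Prop :=
  (forall x y, 0 <= tr W x y) /\ (forall x, \sum_(y : out W) tr W x y = 1).

(* LR-profile: P_W(e) = Pr( L_W(y) = e/(1-e) ), y distributed with uniform input.
   For e in [0,1], L_W(y) = e/(1-e) (in [0,+oo]) iff
   Pr(y|0)(1-e) = Pr(y|1) e and not both are 0. *)
Definition lr_profile (W : chan) (e : R) : R :=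
  \sum_(y : out W | (tr W false y * (1 - e) == tr W true y * e)
                    && ((tr W false y != 0) || (tr W true y != 0)))
     (tr W false y + tr W true y) / 2.

Definition chan_equiv (W W' : chan) : Prop :=
  forall e, 0 <= e <= 1 -> lr_profile W e = lr_profile W' e.

Definition degraded (W' W : chan) : Prop :=
  exists T : out W -> out W' -> R,
    (forall y y', 0 <= T y y') /\ (forall y, \sum_(y' : out W') T y y' = 1) /\
    (forall a y', tr W' a y' = \sum_(y : out W) tr W a y * T y y').

(* random switching channel sum_i w_i B(eps_i), outputting the index *)
Definition switch (I : finType) (w eps : I -> R) : chan :=
  @Chan (I * bool)%type
    (fun x yb => w yb.1 * (if yb.2 == x then 1 - eps yb.1 else eps yb.1)).

Definition in_B (n : nat) (W : chan) : Prop :=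
  valid W /\
  exists p eps : 'I_n -> R,
    (forall i, 0 <= p i) /\ \sum_i p i = 1 /\ (forall i, 0 <= eps i <= 1) /\
    chan_equiv W (switch p eps).

Definition in_Bstar (n : nat) (W : chan) : Prop := in_B n W /\ ~ in_B n.-1 W.

Definition Perr (W : chan) : R :=
  (\sum_(y : out W) Num.min (tr W false y) (tr W true y)) / 2.

Definition P_degradation (n : nat) (Q W : chan) : Prop :=
  in_B n W /\ degraded W Q /\
  forall W' : chan, in_B n W' -> degraded W' Q -> Perr W <= Perr W'.

(* Q = sum_{i in [m]} q_i B(sg_i), indices 1..m *)
Definition Qchan (m : nat) (q sg : nat -> R) : chan :=
  @switch 'I_m (fun i => q i.+1) (fun i => sg i.+1).

(* Construction of D_Q; indices i_2..i_n given by ii, s_2..s_n by s *)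
Section DQ.
Variables (m : nat) (q sg : nat -> R) (n : nat) (ii : nat -> nat) (s : nat -> R).

Definition qx (i : nat) : R := if (1 <= i <= m)%N then q i else 0.
Definition iext (j : nat) : nat :=
  if j == 1%N then 0%N else if j == n.+1 then m.+1 else ii j.
Definition sext (j : nat) : R := if (j == 1%N) || (j == n.+1) then 0 else s j.

Definition dq_p (j : nat) : R :=
  sext j + (qx (iext j.+1) - sext j.+1) + \sum_((iext j).+1 <= i < iext j.+1) qx i.

Definition dq_num (j : nat) : R :=
  sext j * sg (iext j) + (qx (iext j.+1) - sext j.+1) * sg (iext j.+1)
  + \sum_((iext j).+1 <= i < iext j.+1) qx i * sg i.

(* eps_j, defined by p_j eps_j = dq_num j (only meaningful when p_j > 0) *)
Definition dq_eps (j : nat) : R := dq_num j / dq_p j.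

Definition DQ : chan :=
  @switch {j : 'I_n | 0 < dq_p j.+1}
     (fun j => dq_p (val j).+1) (fun j => dq_eps (val j).+1).

Definition dq_params : Prop :=
  (forall j, (2 <= j <= n)%N -> (1 <= ii j <= m)%N) /\
  (forall j, (2 <= j < n)%N -> (ii j < ii j.+1)%N) /\
  (forall j, (2 <= j <= n)%N -> 0 <= s j <= q (ii j)).

Definition Pstar_degradation : Prop :=
  ((forall j, (1 <= j <= n)%N -> 0 < dq_p j) /\
   0 <= dq_eps 1 /\ (forall j, (1 <= j < n)%N -> dq_eps j < dq_eps j.+1) /\
   dq_eps n <= 1 / 2) /\
  P_degradation n (Qchan m q sg) DQ /\
  (forall j, (1 <= j <= n)%N -> iext j.+1 = (iext j).+1 ->
     (sext j = 0 -> sext j.+1 = 0) /\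
     (sext j.+1 = qx (iext j.+1) -> sext j = qx (iext j))).
End DQ.
End Channels.

From mathcomp Require Import all_boot all_order all_algebra.
From mathcomp Require Import reals.
From mathcomp Require Import ring lra zify.
Import Order.TTheory GRing.Theory Num.Theory.
Local Open Scope ring_scope.

(* Cut the weights q_1, ..., q_m at (i_j, s_j): keep everything up to index i_j
   except s_j of the weight at i_j.  With H the cumulative mass and K the cumulative
   moment (sum of q_i sg_i) of a cut, p_j = H_(j+1) - H_j and p_j eps_j = K_(j+1) - K_j.
   Since sg increases, the points (H, K) lie on a convex curve, so chords sharing an
   endpoint get steeper as their other endpoint moves right.  A longer chord that is
   not steeper forces both chords onto a single line of slope sg_i, i.e. puts all of
   their mass on one index; positivity of the q_i and condition (iii) of
   P*-degradations rule this out. *)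

Section Cuts.
Context {R : comPzRingType} (w sg : nat -> R).

Definition cut_mass (a : nat) (s : R) : R := \sum_(0 <= i < a.+1) w i - s.
Definition cut_moment (a : nat) (s : R) : R :=
  \sum_(0 <= i < a.+1) w i * sg i - s * sg a.

Lemma cut_mass_sub a s b t : (a < b)%N ->
  cut_mass b t - cut_mass a s = s + (w b - t) + \sum_(a.+1 <= i < b) w i.
Proof.
move=> ltab; rewrite /cut_mass (big_cat_nat _ (n := a.+1)) //=; last exact: ltnW.
by rewrite [\sum_(a.+1 <= i < b.+1) _]big_nat_recr //=; ring.
Qed.

Lemma cut_moment_sub a s b t : (a < b)%N ->
  cut_moment b t - cut_moment a s =
  s * sg a + (w b - t) * sg b + \sum_(a.+1 <= i < b) w i * sg i.
Proof.
move=> ltab; rewrite /cut_moment (big_cat_nat _ (n := a.+1)) //=; last exact: ltnW.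
by rewrite [\sum_(a.+1 <= i < b.+1) _]big_nat_recr //=; ring.
Qed.

Lemma cut_moment_sub_same a s t :
  cut_moment a t - cut_moment a s = sg a * (cut_mass a t - cut_mass a s).
Proof. by rewrite /cut_moment /cut_mass; ring. Qed.

Lemma cut_mass_succ b : cut_mass b.+1 (w b.+1) = cut_mass b 0.
Proof. by rewrite /cut_mass big_nat_recr //= addrK subr0. Qed.

Lemma cut_moment_succ b : cut_moment b.+1 (w b.+1) = cut_moment b 0.
Proof. by rewrite /cut_moment big_nat_recr //= addrK mul0r subr0. Qed.

Lemma cut_mass_sub0 a s b : (a <= b)%N ->
  cut_mass b 0 - cut_mass a s = s + \sum_(a.+1 <= i < b.+1) w i.
Proof. by move=> leab; rewrite -cut_mass_succ cut_mass_sub // subrr addr0. Qed.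

End Cuts.

Lemma chords_on_line_of_slope_le_l {R : realFieldType} {h0 h1 h2 k0 k1 k2 c : R} :
  h0 < h1 -> h1 < h2 -> k1 - k0 <= c * (h1 - h0) -> c * (h2 - h1) <= k2 - k1 ->
  (k2 - k0) / (h2 - h0) <= (k1 - k0) / (h1 - h0) ->
  k1 - k0 = c * (h1 - h0) /\ k2 - k1 = c * (h2 - h1).
Proof.
move=> h01 h12 hl hr; have h02 := lt_trans h01 h12.
rewrite ler_pdivrMr ?subr_gt0 // mulrAC ler_pdivlMr ?subr_gt0 //.
nra.
Qed.

Lemma chords_on_line_of_slope_le_r {R : realFieldType} {h0 h1 h2 k0 k1 k2 c : R} :
  h0 < h1 -> h1 < h2 -> k1 - k0 <= c * (h1 - h0) -> c * (h2 - h1) <= k2 - k1 ->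
  (k2 - k1) / (h2 - h1) <= (k2 - k0) / (h2 - h0) ->
  k1 - k0 = c * (h1 - h0) /\ k2 - k1 = c * (h2 - h1).
Proof.
move=> h01 h12 hl hr; have h02 := lt_trans h01 h12.
rewrite ler_pdivrMr ?subr_gt0 // mulrAC ler_pdivlMr ?subr_gt0 //.
nra.
Qed.

Section CutInequalities.
Context {R : realFieldType} {w sg : nat -> R}.
Hypothesis w_ge0 : forall i, 0 <= w i.
Hypothesis sg_lt : {homo sg : i j / (i < j)%N >-> i < j}.

Let sg_le : {homo sg : i j / (i <= j)%N >-> i <= j}.
Proof. by move=> i j; rewrite leq_eqVlt => /orP [/eqP ->|/sg_lt /ltW]. Qed.

Let sum_w_ge0 a b : 0 <= \sum_(a <= i < b) w i.
Proof. exact: sumr_ge0. Qed.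

Local Notation H := (cut_mass w).
Local Notation K := (cut_moment w sg).

Lemma cut_mass_le {a s b t} : (a < b)%N -> 0 <= s -> t <= w b -> H a s <= H b t.
Proof.
move=> ltab s0 tb; rewrite -subr_ge0 cut_mass_sub //.
have := sum_w_ge0 a.+1 b; lra.
Qed.

Lemma cut_moment_sub_le {a s b t} : (a <= b)%N -> 0 <= s ->
  K b t - K a s <= sg b * (H b t - H a s).
Proof.
rewrite leq_eqVlt => /orP [/eqP <- _|ltab s0].
  by rewrite /cut_moment /cut_mass; lra.
rewrite cut_moment_sub // cut_mass_sub // !mulrDr.
have ha : s * sg a <= sg b * s by rewrite mulrC; apply: ler_wpM2r => //; exact/sg_le/ltnW.
have hi : \sum_(a.+1 <= i < b) w i * sg i <= sg b * \sum_(a.+1 <= i < b) w i.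
  rewrite mulr_sumr; apply: ler_sum_nat => i /andP [_ ltib].
  by rewrite mulrC; apply: ler_wpM2r => //; exact/sg_le/ltnW.
lra.
Qed.

Lemma cut_moment_sub_ge {a s b t} : (a <= b)%N -> t <= w b ->
  sg a * (H b t - H a s) <= K b t - K a s.
Proof.
rewrite leq_eqVlt => /orP [/eqP <- _|ltab tb].
  by rewrite /cut_moment /cut_mass; lra.
rewrite cut_moment_sub // cut_mass_sub // !mulrDr.
have hb : sg a * (w b - t) <= (w b - t) * sg b.
  by rewrite mulrC; apply: ler_wpM2l; rewrite ?subr_ge0 //; exact/sg_le/ltnW.
have hi : sg a * \sum_(a.+1 <= i < b) w i <= \sum_(a.+1 <= i < b) w i * sg i.
  rewrite mulr_sumr; apply: ler_sum_nat => i /andP [ltai _].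
  by rewrite mulrC; apply: ler_wpM2l => //; exact/sg_le/ltnW.
lra.
Qed.

Lemma cut_moment_sub_eq_max {a s b t} : (a < b)%N -> 0 <= s ->
  (forall i, (a < i < b)%N -> 0 < w i) ->
  K b t - K a s = sg b * (H b t - H a s) -> s = 0 /\ b = a.+1.
Proof.
case: b => // b; rewrite ltnS => leab s0 w_gt0 heq.
have hfirst := @cut_moment_sub_le a s b 0 leab s0.
have hsegment := cut_moment_sub_same w sg b.+1 (w b.+1) t.
rewrite cut_moment_succ cut_mass_succ in hsegment.
have mass0 : H b 0 - H a s = 0.
  have : 0 <= H b 0 - H a s by rewrite cut_mass_sub0 // addr_ge0.
  have /sg_lt := ltnSn b; nra.
move: mass0; rewrite cut_mass_sub0 // => /eqP; rewrite paddr_eq0 ?sum_w_ge0 //.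
case/andP=> /eqP -> /eqP sum0; split=> //; apply/eqP.
rewrite eqSS eqn_leq leab andbT leqNgt; apply/negP => ltab; move: sum0.
rewrite big_ltn //.
have := sum_w_ge0 a.+2 b.+1; have : 0 < w a.+1 by apply: w_gt0; rewrite ltnSn.
lra.
Qed.

Lemma cut_moment_sub_eq_min {a s b t} : (a < b)%N -> t <= w b ->
  (forall i, (a < i < b)%N -> 0 < w i) ->
  K b t - K a s = sg a * (H b t - H a s) -> t = w b /\ b = a.+1.
Proof.
move=> ltab tb w_gt0 heq.
have hfirst := cut_moment_sub_same w sg a 0 s.
have hlast := @cut_moment_sub_ge a.+1 (w a.+1) b t ltab tb.
rewrite cut_moment_succ cut_mass_succ in hlast.
have mass0 : H b t - H a 0 = 0.
  have : 0 <= H b t - H a 0 by rewrite cut_mass_sub // add0r addr_ge0 ?subr_ge0.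
  have /sg_lt := ltnSn a; nra.
move: mass0; rewrite cut_mass_sub // add0r => /eqP.
rewrite paddr_eq0 ?subr_ge0 ?sum_w_ge0 // => /andP [/eqP wbt /eqP sum0].
split; first lra.
apply/eqP; rewrite eqn_leq ltab andbT leqNgt; apply/negP => ltab1; move: sum0.
rewrite big_ltn //.
have := sum_w_ge0 a.+2 b; have : 0 < w a.+1 by apply: w_gt0; rewrite ltnSn.
lra.
Qed.

Lemma cut_moment_sub_gt {b c u} : 0 <= u -> u <= w c -> H b 0 < H c u ->
  sg b * (H c u - H b 0) < K c u - K b 0.
Proof.
move=> u0 uc hlt.
have ltbc : (b < c)%N.
  rewrite ltnNge; apply/negP => lecb.
  by have := @cut_mass_le c u b.+1 (w b.+1) lecb u0 (lexx _); rewrite cut_mass_succ; lra.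
have := @cut_moment_sub_ge b.+1 (w b.+1) c u ltbc uc.
rewrite cut_moment_succ cut_mass_succ.
have /sg_lt := ltnSn b; nra.
Qed.

Lemma cut_moment_sub_lt {a a' s'} : 0 <= s' -> s' <= w a' -> H a' s' < H a (w a) ->
  K a (w a) - K a' s' < sg a * (H a (w a) - H a' s').
Proof.
move=> s'0 s'a hlt.
have ltaa' : (a' < a)%N.
  rewrite ltnNge leq_eqVlt; apply/negP => /orP [/eqP eaa'|ltaa'].
    by move: hlt; rewrite eaa' /cut_mass; lra.
  by have := cut_mass_le ltaa' (w_ge0 a) s'a; lra.
case: a ltaa' hlt => // a; rewrite ltnS => lea'a hlt.
rewrite cut_moment_succ cut_mass_succ in hlt *.
have := @cut_moment_sub_le a' s' a 0 lea'a s'0.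
have /sg_lt := ltnSn a; nra.
Qed.

Lemma cut_mass_le_of_slope_le_l {a s b t c u} :
  0 <= s -> t <= w b -> 0 <= u -> u <= w c -> (a < b)%N ->
  (forall i, (a < i < b)%N -> 0 < w i) -> (b = a.+1 -> s = 0 -> t = 0) ->
  H a s < H b t ->
  (K c u - K a s) / (H c u - H a s) <= (K b t - K a s) / (H b t - H a s) ->
  H c u - H a s <= H b t - H a s.
Proof.
move=> s0 tb u0 uc ltab w_gt0 end_unsplit hAB hslope.
rewrite lerD2r leNgt; apply/negP => hBC.
have lebc : (b <= c)%N.
  by rewrite leqNgt; apply/negP => /(cut_mass_le)/(_ u0 tb); lra.
have [hAB_line hBC_line] := chords_on_line_of_slope_le_l hAB hBC
  (cut_moment_sub_le (ltnW ltab) s0) (cut_moment_sub_ge (t := u) lebc uc) hslope.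
have [s_eq0 eb] := cut_moment_sub_eq_max ltab s0 w_gt0 hAB_line.
have t_eq0 := end_unsplit eb s_eq0; subst b t.
by have := cut_moment_sub_gt u0 uc hBC; lra.
Qed.

Lemma cut_mass_le_of_slope_le_r {a s a' s' b t} :
  0 <= s -> 0 <= s' -> s' <= w a' -> t <= w b -> (a < b)%N ->
  (forall i, (a < i < b)%N -> 0 < w i) -> (b = a.+1 -> t = w b -> s = w a) ->
  H a s < H b t ->
  (K b t - K a s) / (H b t - H a s) <= (K b t - K a' s') / (H b t - H a' s') ->
  H b t - H a' s' <= H b t - H a s.
Proof.
move=> s0 s'0 s'a tb ltab w_gt0 start_unsplit hAB hslope.
rewrite lerD2l lerN2 leNgt; apply/negP => hA'A.
have lea'a : (a' <= a)%N.
  by rewrite leqNgt; apply/negP => /(cut_mass_le)/(_ s0 s'a); lra.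
have [hA'A_line hAB_line] := chords_on_line_of_slope_le_r hA'A hAB
  (cut_moment_sub_le lea'a s'0) (cut_moment_sub_ge (s := s) (ltnW ltab) tb) hslope.
have [t_eq eb] := cut_moment_sub_eq_min ltab tb w_gt0 hAB_line.
have s_eq := start_unsplit eb t_eq; subst b s.
by have := cut_moment_sub_lt s'0 s'a hA'A; lra.
Qed.

End CutInequalities.

(* The values at 0 and beyond m only meet zero weights (q_0 = q_(m+1) = 0); they are
   chosen to make the extension strictly increasing. *)
Definition sg_ext {R : numDomainType} (m : nat) (sg : nat -> R) (i : nat) : R :=
  if i == 0%N then sg 1%N - 1 else if (m < i)%N then sg m + i%:R else sg i.

Lemma sg_ext_lt {R : numDomainType} {m} {sg : nat -> R} : (1 <= m)%N ->
  (forall i, (1 <= i < m)%N -> sg i < sg i.+1) ->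
  {homo sg_ext m sg : i j / (i < j)%N >-> i < j}.
Proof.
move=> m1 sg_lt; apply: homo_ltn => [i j k|i]; first exact: lt_trans.
rewrite /sg_ext; case: i => [|i] /=.
  by rewrite ifF ?ltrBlDr ?ltrDl //; lia.
case: (ltngtP m i.+1) => hm.
- by rewrite ifT ?ltrD2l ?ltr_nat //; lia.
- by rewrite ifF; [apply: sg_lt | ]; lia.
- by rewrite -hm ltnSn ltrDl.
Qed.

Lemma sg_ext_mul {R : realType} {m} {q : nat -> R} (sg : nat -> R) {c : R} {i} :
  0 <= c <= qx m q i -> c * sg_ext m sg i = c * sg i.
Proof.
move=> /andP [c0 cq]; have [i_in|i_out] := boolP (1 <= i <= m)%N.
  by rewrite /sg_ext ifF ?ifF //; lia.
have -> : c = 0 by move: cq; rewrite /qx (negbTE i_out); lra.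
by rewrite !mul0r.
Qed.

Lemma qx_ge0 {R : realType} {m} {q : nat -> R} :
  (forall i, (1 <= i <= m)%N -> 0 < q i) -> forall i, 0 <= qx m q i.
Proof. by move=> q_gt0 i; rewrite /qx; case: ifP => // /q_gt0 /ltW. Qed.

Lemma iext_inner m n ii J : (2 <= J <= n)%N -> iext m n ii J = ii J.
Proof. by move=> hJ; rewrite /iext !ifF //; lia. Qed.

Lemma sext_inner {R : realType} n (s : nat -> R) J : (2 <= J <= n)%N -> sext n s J = s J.
Proof. by move=> hJ; rewrite /sext ifF //; lia. Qed.

Definition dq_mass {R : realType} m n (q : nat -> R) ii (s : nat -> R) J :=
  cut_mass (qx m q) (iext m n ii J) (sext n s J).
Definition dq_moment {R : realType} m n (q sg : nat -> R) ii (s : nat -> R) J :=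
  cut_moment (qx m q) (sg_ext m sg) (iext m n ii J) (sext n s J).

Section DQ.
Context {R : realType} {m n : nat} {q : nat -> R} {ii : nat -> nat} {s : nat -> R}.
Hypothesis q_gt0 : forall i, (1 <= i <= m)%N -> 0 < q i.
Hypothesis params : dq_params m q n ii s.

Local Notation mass := (dq_mass m n q ii s).

Lemma iext_lt {J} : (1 <= J <= n)%N -> (iext m n ii J < iext m n ii J.+1)%N.
Proof.
case: params => range [incr _] hJ; rewrite /iext.
have := range J; have := range J.+1; have := incr J.
by repeat case: eqP; lia.
Qed.

Lemma iext_le {J} : (1 <= J <= n.+1)%N -> (iext m n ii J <= m.+1)%N.
Proof.
case: params => range _ hJ; rewrite /iext; have := range J.
by repeat case: eqP; lia.
Qed.

Lemma sext_bounds {J} : (1 <= J <= n.+1)%N -> 0 <= sext n s J <= qx m q (iext m n ii J).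
Proof.
case: params => range [_ bounds] hJ; rewrite /sext /iext /qx.
have := range J; have := bounds J.
by move=> hs hr; repeat case: ifP => //=; rewrite ?lexx //; lia.
Qed.

Lemma qx_gt0_between {J} : (1 <= J <= n)%N ->
  forall i, (iext m n ii J < i < iext m n ii J.+1)%N -> 0 < qx m q i.
Proof.
move=> hJ i hi; have : (iext m n ii J.+1 <= m.+1)%N by apply: iext_le; lia.
by move=> hle; rewrite /qx ifT ?q_gt0; lia.
Qed.

Lemma dq_p_mass {J} : (1 <= J <= n)%N ->
  dq_p m q n ii s J = mass J.+1 - mass J.
Proof. by move=> hJ; rewrite /dq_mass cut_mass_sub // iext_lt. Qed.

Lemma dq_eps_slope sg {J} : (1 <= J <= n)%N ->
  dq_eps m q sg n ii s J =
  (dq_moment m n q sg ii s J.+1 - dq_moment m n q sg ii s J) / (mass J.+1 - mass J).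
Proof.
move=> hJ; rewrite /dq_eps dq_p_mass // /dq_moment cut_moment_sub ?iext_lt //.
have hs : 0 <= sext n s J <= qx m q (iext m n ii J) by apply: sext_bounds; lia.
have ht : 0 <= qx m q (iext m n ii J.+1) - sext n s J.+1 <= qx m q (iext m n ii J.+1).
  have /andP [t0 tq] : 0 <= sext n s J.+1 <= qx m q (iext m n ii J.+1).
    by apply: sext_bounds; lia.
  by apply/andP; split; lra.
rewrite /dq_num (sg_ext_mul sg hs) (sg_ext_mul sg ht); congr ((_ + _) / _).
apply: eq_big_nat => i _.
have hi : 0 <= qx m q i <= qx m q i by rewrite qx_ge0 ?lexx.
by rewrite (sg_ext_mul sg hi).
Qed.
End DQ.

Lemma dq_p_le_of_eps_le_l {R : realType} {m n} {q sg : nat -> R} {ii s ii' s' k j} :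
  (1 <= m)%N -> (forall i, (1 <= i <= m)%N -> 0 < q i) ->
  (forall i, (1 <= i < m)%N -> sg i < sg i.+1) ->
  dq_params m q n ii s -> dq_params m q n ii' s' ->
  (1 <= k <= n)%N -> (1 <= j <= n)%N ->
  iext m n ii' j = iext m n ii k -> sext n s' j = sext n s k ->
  0 < dq_p m q n ii s k ->
  (iext m n ii k.+1 = (iext m n ii k).+1 -> sext n s k = 0 -> sext n s k.+1 = 0) ->
  dq_eps m q sg n ii' s' j <= dq_eps m q sg n ii s k ->
  dq_p m q n ii' s' j <= dq_p m q n ii s k.
Proof.
move=> m1 q_gt0 sg_lt hp hp' hk hj ei es hpos unsplit.
rewrite !dq_eps_slope // !dq_p_mass // subr_gt0 in hpos *.
rewrite /dq_mass /dq_moment ei es in hpos *.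
have hk' : (1 <= k <= n.+1)%N by lia.
have hk1 : (1 <= k.+1 <= n.+1)%N by lia.
have hj1 : (1 <= j.+1 <= n.+1)%N by lia.
have /andP [s0 _] := sext_bounds hp hk'.
have /andP [_ tb] := sext_bounds hp hk1.
have /andP [u0 uc] := sext_bounds hp' hj1.
apply: (cut_mass_le_of_slope_le_l (qx_ge0 q_gt0) (sg_ext_lt m1 sg_lt) s0 tb u0 uc
  (iext_lt hp hk) (qx_gt0_between q_gt0 hp hk) unsplit hpos).
Qed.

Lemma dq_p_le_of_eps_le_r {R : realType} {m n} {q sg : nat -> R} {ii s ii' s' k j} :
  (1 <= m)%N -> (forall i, (1 <= i <= m)%N -> 0 < q i) ->
  (forall i, (1 <= i < m)%N -> sg i < sg i.+1) ->
  dq_params m q n ii s -> dq_params m q n ii' s' ->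
  (1 <= k <= n)%N -> (1 <= j <= n)%N ->
  iext m n ii' j.+1 = iext m n ii k.+1 -> sext n s' j.+1 = sext n s k.+1 ->
  0 < dq_p m q n ii s k ->
  (iext m n ii k.+1 = (iext m n ii k).+1 ->
     sext n s k.+1 = qx m q (iext m n ii k.+1) -> sext n s k = qx m q (iext m n ii k)) ->
  dq_eps m q sg n ii s k <= dq_eps m q sg n ii' s' j ->
  dq_p m q n ii' s' j <= dq_p m q n ii s k.
Proof.
move=> m1 q_gt0 sg_lt hp hp' hk hj ei es hpos unsplit.
rewrite !dq_eps_slope // !dq_p_mass // subr_gt0 in hpos *.
rewrite /dq_mass /dq_moment ei es in hpos *.
have hk' : (1 <= k <= n.+1)%N by lia.
have hj' : (1 <= j <= n.+1)%N by lia.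
have hk1 : (1 <= k.+1 <= n.+1)%N by lia.
have /andP [s0 _] := sext_bounds hp hk'.
have /andP [s'0 s'a] := sext_bounds hp' hj'.
have /andP [_ tb] := sext_bounds hp hk1.
apply: (cut_mass_le_of_slope_le_r (qx_ge0 q_gt0) (sg_ext_lt m1 sg_lt) s0 s'0 s'a tb
  (iext_lt hp hk) (qx_gt0_between q_gt0 hp hk) unsplit hpos).
Qed.

Theorem lemma9 (R : realType) (m n : nat) (q sg : nat -> R)
  (ii ii' : nat -> nat) (s s' : nat -> R) (k j : nat) :
  (2 <= n)%N -> (n < m)%N ->
  (forall i, (1 <= i <= m)%N -> 0 < q i) ->
  \sum_(1 <= i < m.+1) q i = 1 ->
  0 <= sg 1%N -> (forall i, (1 <= i < m)%N -> sg i < sg i.+1) -> sg m <= 1 / 2 ->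
  in_Bstar m (Qchan m q sg) ->
  dq_params m q n ii s -> dq_params m q n ii' s' ->
  Pstar_degradation m q sg n ii s -> Pstar_degradation m q sg n ii' s' ->
  (2 <= k <= n)%N -> (2 <= j <= n)%N ->
  ii k = ii' j -> s k = s' j ->
  (dq_eps m q sg n ii' s' j <= dq_eps m q sg n ii s k ->
     dq_p m q n ii' s' j <= dq_p m q n ii s k) /\
  (dq_eps m q sg n ii s k.-1 <= dq_eps m q sg n ii' s' j.-1 ->
     dq_p m q n ii' s' j.-1 <= dq_p m q n ii s k.-1).
Proof.
move=> hn hnm q_gt0 _ _ sg_lt _ _ hp hp' [[p_gt0 _] [_ unsplit]] _ hk hj eii es.
have m1 : (1 <= m)%N by lia.
split.
- have hk1 : (1 <= k <= n)%N by lia.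
  apply: (dq_p_le_of_eps_le_l m1 q_gt0 sg_lt hp hp' hk1 _ _ _ (p_gt0 k hk1)
    (fun e => (unsplit k hk1 e).1)); first lia.
  + by rewrite !iext_inner.
  + by rewrite !sext_inner.
- case: k j hk hj eii es => [|k] [|j] //= hk hj eii es.
  have hk1 : (1 <= k <= n)%N by lia.
  apply: (dq_p_le_of_eps_le_r m1 q_gt0 sg_lt hp hp' hk1 _ _ _ (p_gt0 k hk1)
    (fun e => (unsplit k hk1 e).2)); first lia.
  + by rewrite !iext_inner.
  + by rewrite !sext_inner.
Qed.
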